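(* Let $G$ be a planar PCC graph, let $v,v'$ be vertices and let $\sigma,\sigma'$ be faces with $\sigma\in F(v)$, $\sigma'\in F(v')$ and $|\sigma|,|\sigma'|\ge 20$. If $v$ and $v'$ are adjacent in $G$, then $\sigma=\sigma'$ and the edge $vv'$ lies on the boundary of $\sigma$ (i.e. $vv'\in E(\sigma)$).
   Context: $G$ is a finite simple connected graph 2-cell embedded in the sphere. For a face $\sigma$, $E(\sigma)$ is the multiset of edges on its boundary walk and $|\sigma|$ is its length; for a vertex $v$, $F(v)$ is the multiset of faces incident to $v$ (one per corner) and $K(v)=1-\frac{\deg(v)}{2}+\sum_{\sigma\in F(v)}\frac1{|\sigma|}$. A prism (resp. antiprism) of order $N$ is the planar graph with $2N$ vertices, two $N$-faces and $N$ quadrilaterals (resp. $2N$ triangles), each vertex incident to two quadrilaterals and one $N$-face (resp. three triangles and one $N$-face). A planar PCC graph is such a $G$ with $K(v)>0$, $\deg(v)\ge3$ for all $v$, not a prism or antiprism. *)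

(* A graph 2-cell embedded in the sphere is represented by a
   combinatorial map (rotation system) on a finite set of darts D:
   alpha = fixed-point-free involution (reversing a dart),
   sigma = permutation rotating the darts around their tail vertex,
   phi = sigma \o alpha = face permutation (boundary walks).
   Vertices = sigma-orbits, faces = phi-orbits, edges = alpha-orbits.
   Genus 0 (sphere) is imposed via Euler's formula V - E + F = 2. *)
From HB Require Import structures.
From mathcomp Require Import all_boot all_order all_algebra.
Set Implicit Arguments. Unset Strict Implicit. Unset Printing Implicit Defensive.
Import GRing.Theory Num.Theory.

Section Maps.
Variables (D : finType) (alpha sigma : D -> D).

Definition phi (d : D) : D := sigma (alpha d).

Definition vertex_of (d : D) : {set D} := [set x | fconnect sigma d x].
(* the face whose boundary walk traverses the dart d; its darts = E(face) *)
Definition face_of (d : D) : {set D} := [set x | fconnect phi d x].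

Definition vertices : {set {set D}} := [set vertex_of d | d : D].
Definition faces : {set {set D}} := [set face_of d | d : D].
Definition is_vertex (v : {set D}) := v \in vertices.
Definition is_face (f : {set D}) := f \in faces.

(* deg v = #|v| (no loops);  |f| = #|f| = length of boundary walk *)
(* corners of v <-> darts d in v; the corner between d and sigma d lies on
   face_of (sigma d); hence F(v) = multiset {face_of d | d in v}. *)
Definition incident_face (v f : {set D}) : bool := [exists d in v, d \in f].

Definition curv (v : {set D}) : rat :=
  1 - (#|v|%:R / 2%:R) + \sum_(d in v) (#|face_of d|%:R)^-1.

Definition adjacent (v v' : {set D}) : bool := [exists d in v, alpha d \in v'].

Definition edge_on_face (v v' f : {set D}) : bool :=
  [exists d in v, (alpha d \in v') && ((d \in f) || (alpha d \in f))].

Definition connected_map : Prop :=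
  forall x y, connect (fun a b => (b == alpha a) || (b == sigma a)) x y.

Definition planar_map : Prop :=
  injective sigma /\ involutive alpha /\ (forall d, alpha d != d) /\
      connected_map /\
      (* no loops *) (forall d, ~~ fconnect sigma d (alpha d)) /\
      (* no multiple edges *)
      (forall d d', fconnect sigma d d' -> fconnect sigma (alpha d) (alpha d') -> d = d') /\
      (* Euler: V - E + F = 2, with E = #|D|/2 *)
      (#|vertices| + #|faces|).*2 = #|D| + 4.

Definition is_prism : Prop :=
  exists N, exists f1 f2 : {set D},
    [/\ 3 <= N /\ is_face f1 /\ is_face f2 /\ f1 != f2, #|f1| = N /\ #|f2| = N,
        #|vertices| = 2 * N /\ #|faces| = N + 2,
        (forall f, is_face f -> f != f1 -> f != f2 -> #|f| = 4) &
        (forall v, is_vertex v -> #|v| = 3 /\ #|v :&: (f1 :|: f2)| = 1)].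

Definition is_antiprism : Prop :=
  exists N, exists f1 f2 : {set D},
    [/\ 3 <= N /\ is_face f1 /\ is_face f2 /\ f1 != f2, #|f1| = N /\ #|f2| = N,
        #|vertices| = 2 * N /\ #|faces| = 2 * N + 2,
        (forall f, is_face f -> f != f1 -> f != f2 -> #|f| = 3) &
        (forall v, is_vertex v -> #|v| = 4 /\ #|v :&: (f1 :|: f2)| = 1)].

Definition planar_pcc : Prop :=
  [/\ planar_map,
      (forall v, is_vertex v -> (0 < curv v)%R /\ 3 <= #|v|),
      ~ is_prism & ~ is_antiprism].

End Maps.

(* Positive curvature leaves little room around a corner on a face of length at
   least 20: such a vertex has no other large corner, has degree 3 or 4, and its
   remaining faces are (essentially) quadrangles, resp. triangles.  Suppose two
   adjacent vertices both carry large corners but the edge between them lies on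
   neither large face.  This local picture then repeats along the large faces,
   and by connectedness every vertex has degree k in {3, 4}, exactly one large
   corner, and all other faces of length 7 - k.  Counting vertices and faces
   with Euler's formula leaves exactly two large faces, of equal length, and the
   map is a prism (k = 3) or an antiprism (k = 4). *)

From HB Require Import structures.
From mathcomp Require Import all_boot all_order all_algebra.
From mathcomp Require Import lra.
Set Implicit Arguments. Unset Strict Implicit. Unset Printing Implicit Defensive.
Import GRing.Theory Num.Theory.

Section InjectiveOrbits.
Variables (T : finType) (f : T -> T).
Hypothesis f_inj : injective f.

Lemma fconnect1r x : fconnect f (f x) x.
Proof. by rewrite fconnect_sym // fconnect1. Qed.

Lemma fconnect_setE x y :
  fconnect f x y -> [set z | fconnect f x z] = [set z | fconnect f y z].
Proof.
by move=> xy; apply/setP => z; rewrite !inE (same_connect (fconnect_sym f_inj) xy).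
Qed.

Lemma fconnect_order x y : fconnect f x y -> order f x = order f y.
Proof.
by move=> xy; apply: eq_card => z; rewrite !inE (same_connect (fconnect_sym f_inj) xy).
Qed.

Lemma iter_neq_lt_order n x : 0 < n < order f x -> iter n f x != x.
Proof.
case/andP=> n_gt0 n_lt; apply: contraTneq n_gt0 => nx.
by rewrite -(findex_iter n_lt) nx findex0.
Qed.

Lemma card_orbit_sets (Q : pred {set T}) :
  (#|[set O in [set [set y | fconnect f x y] | x : T] | Q O]|%:R : rat) =
  (\sum_(x | Q [set y | fconnect f x y]) (order f x)%:R^-1)%R.
Proof.
set orb := fun x => [set y | fconnect f x y].
rewrite (partition_big orb (mem [set O in [set orb x | x : T] | Q O])) /=; last first.
  by move=> x Qx; rewrite inE Qx andbT imset_f.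
rewrite -sum1_card natr_sum; apply: eq_bigr => O; rewrite inE => /andP[/imsetP[y _ ->] Qy].
have orb_eq x : (orb x == orb y) = fconnect f y x.
  apply/eqP/idP => [/setP/(_ x)|yx]; first by rewrite !inE connect0 => <-.
  by rewrite /orb (fconnect_setE yx).
rewrite (eq_bigl (fun x => fconnect f y x)); last first.
  move=> x; rewrite -/(orb x) orb_eq andbC.
  by case yx: (fconnect f y x) => //=; rewrite /orb -(fconnect_setE yx).
rewrite (eq_bigr (fun _ => (order f y)%:R^-1)%R); last first.
  by move=> x yx; rewrite (fconnect_order yx).
rewrite sumr_const -[#|_|]/(order f y) -[RHS]mulr_natr mulVf // pnatr_eq0 -lt0n.
exact: order_gt0.
Qed.

End InjectiveOrbits.

Lemma connected_map_ind (D : finType) (a s : D -> D) (P : D -> Prop) x0 :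
  connected_map a s -> (forall x, P x -> P (a x)) -> (forall x, P x -> P (s x)) ->
  P x0 -> forall y, P y.
Proof.
move=> conn Pa Ps Px0 y; have /connectP [q pq ->] := conn x0 y.
elim: q x0 Px0 pq => [|z q IH] x Px //= /andP[/orP[/eqP->|/eqP->] pq]; apply: IH pq; auto.
Qed.

Record positively_curved (D : finType) (a s : D -> D) : Prop := {
  pc_sigma_inj : injective s;
  pc_alpha_inv : involutive a;
  pc_no_loop : forall d, ~~ fconnect s d (a d);
  pc_no_multi_edge : forall d d', fconnect s d d' -> fconnect s (a d) (a d') -> d = d';
  pc_deg_ge3 : forall x, 3 <= order s x;
  pc_curv_gt0 : forall x, (0 < curv a s (vertex_of s x))%R }.

Section PositivelyCurved.
Variables (D : finType) (a s : D -> D).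
Hypothesis pc : positively_curved a s.
Let sI := pc_sigma_inj pc.
Let aK := pc_alpha_inv pc.
Let deg_ge3 := pc_deg_ge3 pc.
Let curv_gt0 := pc_curv_gt0 pc.

Local Notation p := (phi a s).

Lemma phi_inj : injective p.
Proof. by move=> x y /sI /(can_inj aK). Qed.
Let pI := phi_inj.

Lemma phi_alpha d : p (a d) = s d.
Proof. by rewrite /phi aK. Qed.

Lemma sigma_neq x : s x != x.
Proof.
by have := iter_neq_lt_order (f:=s) (n:=1) (x:=x); apply; rewrite /= (leq_trans _ (deg_ge3 x)).
Qed.

Lemma sigma2_neq x : s (s x) != x.
Proof.
by have := iter_neq_lt_order (f:=s) (n:=2) (x:=x); apply; rewrite /= (leq_trans _ (deg_ge3 x)).
Qed.

Lemma face_order_ge3 x : 3 <= order p x.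
Proof.
case Ho: (order p x) => [|[|[|n]]] //; first by have := order_gt0 p x; rewrite Ho.
- have := iter_order pI x; rewrite Ho /= /phi => Hx.
  by have := pc_no_loop pc x; rewrite -{1}Hx fconnect1r.
- have := iter_order pI x; rewrite Ho /= => Hx.
  set z := p x in Hx.
  have H1 : fconnect s x (a z) by rewrite fconnect_sym // -Hx /phi fconnect1.
  have H2 : fconnect s (a x) (a (a z)) by rewrite aK /z /phi fconnect1.
  have E := pc_no_multi_edge pc H1 H2.
  by have := sigma_neq x; rewrite {1}E -/(phi a s z) Hx eqxx.
Qed.

Definition corner (y : D) : rat := ((order p y)%:R)^-1.

Lemma curv_vertexE x : curv a s (vertex_of s x) =
  (1 - (order s x)%:R / 2%:R + \sum_(y <- orbit s x) corner y)%R.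
Proof.
rewrite /curv /vertex_of cardsE; congr (_ + _)%R.
rewrite big_uniq ?orbit_uniq //; apply: eq_big => y; first by rewrite inE -fconnect_orbit.
by rewrite /face_of cardsE.
Qed.

Definition large (y : D) := 20 <= order p y.

Lemma corner_le k y : 0 < k -> k <= order p y -> (corner y <= k%:R^-1)%R.
Proof.
by move=> k_gt0 le_k; rewrite lef_pV2 ?posrE ?ltr0n ?ler_nat // (leq_trans k_gt0).
Qed.

Lemma sum_corner_le q : (\sum_(y <- q) corner y <= (size q)%:R / 3%:R)%R.
Proof.
elim: q => [|y q IH]; first by rewrite big_nil mul0r.
rewrite big_cons /= -add1n natrD mulrDl mul1r.
by apply: lerD => //; apply: corner_le => //; apply: face_order_ge3.
Qed.

Lemma sum_corner_le1 r x : x \in r ->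
  (\sum_(y <- r) corner y + 3%:R^-1 <= corner x + (size r)%:R / 3%:R)%R.
Proof.
move=> xr; rewrite (perm_big _ (perm_to_rem xr)) big_cons /=.
have := sum_corner_le (rem x r); rewrite size_rem // => le_rem.
have /prednK <- : 0 < size r by case: (r) xr.
by move: le_rem; set m := (size r).-1; rewrite -[m.+1]addn1 natrD; lra.
Qed.

Lemma sum_corner_le2 r x y : uniq r -> x \in r -> y \in r -> x != y ->
  (\sum_(z <- r) corner z + 2%:R / 3%:R <= corner x + corner y + (size r)%:R / 3%:R)%R.
Proof.
move=> r_uniq xr yr xy; rewrite (perm_big _ (perm_to_rem xr)) big_cons /=.
have yr' : y \in rem x r by rewrite (rem_filter _ r_uniq) mem_filter /= eq_sym xy.
have := sum_corner_le1 yr'; rewrite size_rem // => le_rem.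
have /prednK <- : 0 < size r by case: (r) xr.
by move: le_rem; set m := (size r).-1; rewrite -[m.+1]addn1 natrD; lra.
Qed.

Lemma corner_large y : large y -> (corner y <= 20%:R^-1)%R.
Proof. exact: corner_le. Qed.

Lemma large_unique x y : large x -> large y -> fconnect s x y -> x = y.
Proof.
move=> lx ly xy; apply/eqP/negPn/negP => nxy.
have := curv_gt0 x; rewrite curv_vertexE.
have := sum_corner_le2 (orbit_uniq s x) (in_orbit s x) _ nxy.
rewrite -fconnect_orbit => /(_ xy).
have := corner_large lx; have := corner_large ly.
have := deg_ge3 x; rewrite -(ler_nat rat) size_orbit.
move: ((order s x)%:R)%R => n; lra.
Qed.

Lemma large_deg_le4 x : large x -> order s x <= 4.
Proof.
move=> lx; rewrite leqNgt; apply/negP => deg_ge5.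
have := curv_gt0 x; rewrite curv_vertexE.
have := sum_corner_le1 (in_orbit s x); have := corner_large lx.
move: deg_ge5; rewrite -(ler_nat rat) size_orbit.
move: ((order s x)%:R)%R => n; lra.
Qed.

Lemma large_deg3_quadrangles b : large b -> order s b = 3 ->
  4 <= order p (s b) -> 4 <= order p (s (s b)) ->
  order p (s b) = 4 /\ order p (s (s b)) = 4.
Proof.
move=> lb deg3 ge4 ge4'.
have := curv_gt0 b; rewrite curv_vertexE /orbit deg3 /= !big_cons big_nil => curv_b.
have := corner_large lb => le_b.
have absurd A B : (corner (s b) <= A)%R -> (corner (s (s b)) <= B)%R ->
   (A + B <= 2^-1 - 20^-1)%R -> False.
  by move: curv_b le_b; lra.
have eq4 n : 4 <= n -> ~~ (4 < n) -> n = 4.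
  by move=> ge4n ngt4; apply/eqP; rewrite eqn_leq ge4n andbT leqNgt.
split; [apply: eq4 ge4 _ | apply: eq4 ge4' _]; apply/negP => ge5.
- by apply: (absurd (5^-1)%R (4^-1)%R); [exact: corner_le ge5 | exact: corner_le ge4' | lra].
- by apply: (absurd (4^-1)%R (5^-1)%R); [exact: corner_le ge4 | exact: corner_le ge5 | lra].
Qed.

Lemma large_deg4_triangles b : large b -> order s b = 4 ->
  [/\ order p (s b) = 3, order p (s (s b)) = 3 & order p (s (s (s b))) = 3].
Proof.
move=> lb deg4.
have := curv_gt0 b; rewrite curv_vertexE /orbit deg4 /= !big_cons big_nil => curv_b.
have := corner_large lb => le_b.
have ge3 := face_order_ge3; have le3 y : (corner y <= 3^-1)%R by apply: corner_le.
have absurd y : y \in [:: s b; s (s b); s (s (s b))] -> (corner y <= 4^-1)%R -> False.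
  rewrite !inE => /or3P[] /eqP-> le_y;
  by move: curv_b le_b le_y (le3 (s b)) (le3 (s (s b))) (le3 (s (s (s b)))); lra.
have eq3 y : y \in [:: s b; s (s b); s (s (s b))] -> order p y = 3.
  move=> yin; apply/eqP; rewrite eqn_leq ge3 andbT leqNgt; apply/negP => ge4.
  exact: (absurd y yin (corner_le _ ge4)).
by split; apply: eq3; rewrite !inE eqxx ?orbT.
Qed.

Lemma large_phi x : large (p x) = large x.
Proof. by rewrite /large (fconnect_order pI (fconnect1 p x)). Qed.

Lemma large_deg34 b : large b -> order s b = 3 \/ order s b = 4.
Proof.
move=> lb; have := large_deg_le4 lb; have := deg_ge3 b.
by case: (order s b) => [|[|[|[|[|]]]]] //; auto.
Qed.

Lemma sigma3_id b : order s b = 3 -> s (s (s b)) = b.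
Proof. by move=> deg3; have := iter_order sI b; rewrite deg3. Qed.

Lemma sigma4_id b : order s b = 4 -> s (s (s (s b))) = b.
Proof. by move=> deg4; have := iter_order sI b; rewrite deg4. Qed.

Lemma sigma3_neq b : order s b = 4 -> s (s (s b)) != b.
Proof. by move=> deg4; have := iter_neq_lt_order (f:=s) (n:=3) (x:=b); apply; rewrite deg4. Qed.

Lemma vertex_deg3P b y : order s b = 3 -> fconnect s b y ->
  [\/ y = b, y = s b | y = s (s b)].
Proof.
rewrite fconnect_orbit /orbit => ->; rewrite !inE.
by case/or3P => /eqP ->; [apply: Or31 | apply: Or32 | apply: Or33].
Qed.

Lemma vertex_deg4P b y : order s b = 4 -> fconnect s b y ->
  [\/ y = b, y = s b, y = s (s b) | y = s (s (s b))].
Proof.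
rewrite fconnect_orbit /orbit => ->; rewrite !inE.
by case/or4P => /eqP ->; [apply: Or41 | apply: Or42 | apply: Or43 | apply: Or44].
Qed.

Lemma other_corner_not_large b x : large b -> fconnect s b x -> x != b -> ~~ large x.
Proof.
move=> lb bx; apply: contraNN => lx; apply/eqP.
by apply: large_unique lx lb _; rewrite fconnect_sym.
Qed.

(* Around a large corner b, a triangle at s b would put a second large corner
   at the vertex of p b. *)
Lemma no_triangle_next_to_large b : large b -> large (s (s (a (s b)))) ->
  order p (s b) != 3.
Proof.
move=> lb lb'; apply/eqP => tri.
have p3 : p (p (p (s b))) = s b by have := iter_order pI (s b); rewrite tri.
have ppd : p (p (s b)) = a b by apply: pI; rewrite p3 -phi_alpha.
set y := a (s (a (s b))).
have sy : s y = a b by rewrite -ppd.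
have ly : large y by rewrite -large_phi /phi /y aK.
have lpb : large (p b) by rewrite large_phi.
have := large_unique ly lpb; rewrite /phi -sy => /(_ (fconnect_iter s 2 y)) /esym/eqP.
by rewrite (negbTE (sigma2_neq y)).
Qed.

Definition sees_large x := exists z, fconnect s x z /\ large z.

(* [d] joins two vertices with a large corner, yet neither face along [d]
   (that of [d] and that of [s d], which is also that of [a d]) is large. *)
Definition bad_edge d := [/\ sees_large d, sees_large (a d),
  ~~ large d && ~~ large (s d) & ~~ large (a d) && ~~ large (s (a d))].

Lemma bad_edge_alpha d : bad_edge d -> bad_edge (a d).
Proof. by case=> *; split; rewrite ?aK. Qed.

Lemma bad_corner_deg3 b d : large b -> order s b = 3 -> fconnect s b d ->
  ~~ large d -> ~~ large (s d) -> d = s b.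
Proof.
move=> lb deg3 /(vertex_deg3P deg3)[] -> // nl nls.
- by rewrite lb in nl.
- by rewrite sigma3_id // lb in nls.
Qed.

Lemma bad_corner_deg4 b d : large b -> order s b = 4 -> fconnect s b d ->
  ~~ large d -> ~~ large (s d) -> d = s b \/ d = s (s b).
Proof.
move=> lb deg4 /(vertex_deg4P deg4)[] -> nl nls; auto.
- by rewrite lb in nl.
- by rewrite sigma4_id // lb in nls.
Qed.

Lemma order_phi_alpha d : order p (a d) = order p (s d).
Proof. by rewrite -phi_alpha (fconnect_order pI (fconnect1 p _)). Qed.

Lemma bad_edge_quadrangles b b' : large b -> order s b = 3 -> large b' -> order s b' = 3 ->
  a (s b) = s b' -> order p (s b) = 4 /\ order p (a (s b)) = 4.
Proof.
move=> lb deg3 lb' deg3' Eb'.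
have tri_b : order p (s b) != 3.
  by apply: no_triangle_next_to_large lb _; rewrite Eb' sigma3_id.
have tri_b' : order p (s b') != 3.
  by apply: no_triangle_next_to_large => //; rewrite -Eb' aK sigma3_id.
have ge4 x : order p x != 3 -> 4 <= order p x.
  by move=> nx; rewrite ltn_neqAle eq_sym nx face_order_ge3.
rewrite order_phi_alpha.
apply: large_deg3_quadrangles => //; first exact: ge4.
by rewrite -order_phi_alpha Eb'; apply: ge4.
Qed.

Lemma no_edge_large_deg34 b b' : large b -> order s b = 3 -> large b' -> order s b' = 4 ->
  a (s b) = s b' -> False.
Proof.
move=> lb deg3 lb' deg4 Eb'; have [tri _ _] := large_deg4_triangles lb' deg4.
suff : order p (s b') != 3 by rewrite tri.
by apply: no_triangle_next_to_large lb' _; rewrite -Eb' aK sigma3_id.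
Qed.

Lemma no_edge_large_cross b b' : large b -> large b' -> order s b' = 4 ->
  a (s b) = s (s b') -> False.
Proof.
move=> lb lb' deg4 Eb'; have [_ _ tri] := large_deg4_triangles lb' deg4.
suff : order p (s b) != 3.
  by rewrite (fconnect_order pI (fconnect1 p _)) /phi Eb' tri.
by apply: no_triangle_next_to_large lb _; rewrite Eb' sigma4_id.
Qed.

Lemma bad_edge_shape d b b' : bad_edge d -> large b -> fconnect s b d ->
    large b' -> fconnect s b' (a d) ->
  [\/ [/\ order s b = 3, order s b' = 3, d = s b & a d = s b'],
      [/\ order s b = 4, order s b' = 4, d = s b & a d = s b'] |
      [/\ order s b = 4, order s b' = 4, d = s (s b) & a d = s (s b')]].
Proof.
case=> _ _ /andP[nl nls] /andP[nla nlsa] lb bd lb' bd'.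
case: (large_deg34 lb) (large_deg34 lb') => deg [] deg'.
- by apply: Or31; split=> //; apply: bad_corner_deg3.
- have E := bad_corner_deg3 lb deg bd nl nls; rewrite E in bd' nla nlsa.
  case: (bad_corner_deg4 lb' deg' bd' nla nlsa) => E'; exfalso.
  + exact: no_edge_large_deg34 lb deg lb' deg' E'.
  + exact: no_edge_large_cross lb lb' deg' E'.
- have E' := bad_corner_deg3 lb' deg' bd' nla nlsa.
  case: (bad_corner_deg4 lb deg bd nl nls) => E; exfalso.
  + by apply: no_edge_large_deg34 lb' deg' lb deg _; rewrite -E' aK.
  + by apply: no_edge_large_cross lb' lb deg _; rewrite -E' aK.
- case: (bad_corner_deg4 lb deg bd nl nls) => E;
  case: (bad_corner_deg4 lb' deg' bd' nla nlsa) => E'.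
  + exact: Or32.
  + by exfalso; apply: no_edge_large_cross lb lb' deg' _; rewrite -E.
  + by exfalso; apply: no_edge_large_cross lb' lb deg _; rewrite -E' aK.
  + exact: Or33.
Qed.

Lemma face_of_fconnect x y : fconnect p x y -> face_of a s x = face_of a s y.
Proof. exact: fconnect_setE. Qed.

Lemma vertex_of_mem x v : is_vertex s v -> x \in v -> vertex_of s x = v.
Proof. by case/imsetP => z _ -> xz; apply/esym/fconnect_setE; rewrite inE in xz. Qed.

Lemma mem_face_of x : x \in face_of a s x.
Proof. by rewrite inE connect0. Qed.

Lemma face_of_mem x O : is_face a s O -> x \in O -> face_of a s x = O.
Proof. by case/imsetP => z _ -> xz; apply/esym/face_of_fconnect; rewrite inE in xz. Qed.

Definition large_darts := [set x | large x].
Definition large_faces := [set O in faces a s | 20 <= #|O|].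

Lemma in_large_faces O : (O \in large_faces) = is_face a s O && (20 <= #|O|).
Proof. by rewrite inE. Qed.

Lemma large_face_of x : large x -> face_of a s x \in large_faces.
Proof. by move=> lx; rewrite inE /face_of cardsE; apply/andP; split; [apply: imset_f|]. Qed.

Lemma large_facesP O : O \in large_faces -> exists z, large z /\ O = face_of a s z.
Proof. by rewrite inE => /andP[/imsetP[z _ ->]]; rewrite /face_of cardsE; exists z. Qed.

Lemma large_face_size O : O \in large_faces -> forall x, x \in O -> large x.
Proof.
rewrite inE => /andP[OF O20] x xO.
by rewrite /large -(face_of_mem OF xO) /face_of cardsE in O20.
Qed.

Lemma bad_edge_between b b' d : large b -> large b' ->
  fconnect s b d -> fconnect s b' (a d) ->
  d != b -> s d != b -> a d != b' -> s (a d) != b' -> bad_edge d.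
Proof.
move=> lb lb' bd bd' db sdb adb' sadb'.
have bsd : fconnect s b (s d) by apply: connect_trans bd (fconnect1 s d).
have bsd' : fconnect s b' (s (a d)) by apply: connect_trans bd' (fconnect1 s _).
split; first (by exists b; rewrite fconnect_sym); first (by exists b'; rewrite fconnect_sym).
- by rewrite (other_corner_not_large lb bd) ?(other_corner_not_large lb bsd).
- by rewrite (other_corner_not_large lb' bd') ?(other_corner_not_large lb' bsd').
Qed.

(* In a prism or antiprism the rungs are the edges [s b] joining the two large
   faces; [opposite b] is the large corner at the other end of the rung. *)
Definition rung k b := [/\ large b, order s b = k & bad_edge (s b)].
Definition opposite b := finv s (a (s b)).

Lemma oppositeP b w : a (s b) = s w -> opposite b = w.
Proof. by rewrite /opposite => ->; rewrite finv_f. Qed.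

Lemma rung_opposite k b : rung k b -> rung k (opposite b) /\ a (s b) = s (opposite b).
Proof.
case=> lb deg bad; have [_ [b' [bb' lb']] _ _] := bad.
rewrite fconnect_sym // in bb'.
case: (bad_edge_shape bad lb (fconnect1 s b) lb' bb') => [[d3 d3' _ E]|[d4 d4' _ E]|[_ _ E _]].
- rewrite (oppositeP E); split=> //; split=> //; first by rewrite d3' -d3.
  by rewrite -E; apply: bad_edge_alpha.
- rewrite (oppositeP E); split=> //; split=> //; first by rewrite d4' -d4.
  by rewrite -E; apply: bad_edge_alpha.
- by have := sigma_neq b; rewrite -(sI E) eqxx.
Qed.

(* The quadrangle on [s b] closes up at [a b]; its side opposite to [s b] is
   the rung at the next large corner [p b]. *)
Lemma rung_phi3 b : rung 3 b ->
  rung 3 (p b) /\ face_of a s (opposite (p b)) = face_of a s (opposite b).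
Proof.
move=> rb; have [[lb' deg3' _] Eb'] := rung_opposite rb; case: rb => lb deg3 _.
set b' := opposite b in Eb' lb' deg3' *.
have [quad _] := bad_edge_quadrangles lb deg3 lb' deg3' Eb'.
have E3 : p (p (p (s b))) = a b.
  by apply: pI; rewrite phi_alpha; have := iter_order pI (s b); rewrite quad.
set c := a (p (p (s b))).
have sc : s c = a b by rewrite -E3.
have ssc : s (s c) = p b by rewrite sc.
set w := a (s (s b')).
have pw : p w = b' by rewrite /phi /w aK sigma3_id.
have lw : large w by rewrite -large_phi pw.
have ac : a c = s w by rewrite /c aK /w {1}/phi /phi Eb'.
have lpb : large (p b) by rewrite large_phi.
have cpb : fconnect s (p b) c by rewrite fconnect_sym // -ssc (fconnect_iter s 2).
have ac' : fconnect s w (a c) by rewrite ac fconnect1.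
have bad_c : bad_edge c.
  apply: bad_edge_between lpb lw cpb ac' _ _ _ _; rewrite ?ac ?sigma_neq //.
  - by rewrite -ssc eq_sym sigma2_neq.
  - by rewrite -ssc eq_sym sigma_neq.
  - exact: sigma2_neq.
case: (large_deg34 lpb) => deg_pb; last first.
  have [_ _ tri] := large_deg4_triangles lpb deg_pb.
  have Eab : s (s (s (p b))) = a b by apply: sI; rewrite sigma4_id.
  have := quad; rewrite -phi_alpha -(fconnect_order pI (fconnect1 p _)).
  by rewrite -Eab tri.
case: (bad_edge_shape bad_c lpb cpb lw ac') => [[_ _ Ec _]|[]|[]]; rewrite ?deg_pb //.
split; first by split; rewrite // -Ec.
rewrite (@oppositeP _ w) -?Ec // -pw.
exact/face_of_fconnect/fconnect1.
Qed.

(* The third side [c] of the triangle on [s b] is a bad edge at [p b], which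
   forces degree 4 there; the triangle on [a (s (p b))] then makes [s (p b)]
   a rung. *)
Lemma rung_phi4 b : rung 4 b ->
  rung 4 (p b) /\ face_of a s (opposite (p b)) = face_of a s (opposite b).
Proof.
move=> rb; have [[lb' deg4' _] Eb'] := rung_opposite rb; case: rb => lb deg4 _.
set b' := opposite b in Eb' lb' deg4' *.
have [tri _ _] := large_deg4_triangles lb deg4.
have E2 : p (p (s b)) = a b.
  by apply: pI; rewrite phi_alpha; have := iter_order pI (s b); rewrite tri.
have pd : p (s b) = s (s b') by rewrite /phi Eb'.
set c := a (s (s b')).
have ssc : s (s c) = p b by rewrite -[s c]/(p (s (s b'))) -pd E2.
have lpb : large (p b) by rewrite large_phi.
have cpb : fconnect s (p b) c by rewrite fconnect_sym // -ssc (fconnect_iter s 2).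
have ac : fconnect s b' (a c) by rewrite /c aK (fconnect_iter s 2).
have bad_c : bad_edge c.
  apply: bad_edge_between lpb lb' cpb ac _ _ _ _; rewrite ?aK ?sigma2_neq ?sigma3_neq //.
  - by rewrite -ssc eq_sym sigma2_neq.
  - by rewrite -ssc eq_sym sigma_neq.
have deg4pb : order s (p b) = 4.
  by case: (bad_edge_shape bad_c lpb cpb lb' ac) => [[_ deg3']|[]|[]] //; rewrite deg3' in deg4'.
have [_ tri' _] := large_deg4_triangles lpb deg4pb.
set x := s (p b).
have sx : s x = c by apply: sI; apply: sI; rewrite ssc /x sigma4_id.
have tri_ax : order p (a x) = 3 by rewrite order_phi_alpha.
have p3x : p (p (p (a x))) = a x by have := iter_order pI (a x); rewrite tri_ax.
set w := a (s (s (s b'))).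
have axw : a x = s w by rewrite -p3x phi_alpha sx /phi /c aK.
have pw : p w = b' by rewrite /phi /w aK sigma4_id.
have lw : large w by rewrite -large_phi pw.
have bad_x : bad_edge x.
  by apply: bad_edge_between lpb lw (fconnect1 s _) _ _ _ _ _;
    rewrite ?axw ?fconnect1 ?sigma_neq ?sigma2_neq.
split; first by split.
by rewrite (oppositeP axw) -pw; apply/face_of_fconnect/fconnect1.
Qed.

Section Rungs.
Variable k : nat.
Hypothesis k34 : k = 3 \/ k = 4.

Lemma rung_phi b : rung k b ->
  rung k (p b) /\ face_of a s (opposite (p b)) = face_of a s (opposite b).
Proof. by case: k34 => ->; [apply: rung_phi3 | apply: rung_phi4]. Qed.

Lemma rung_face b y : rung k b -> fconnect p b y ->
  rung k y /\ face_of a s (opposite y) = face_of a s (opposite b).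
Proof.
move=> rb /iter_findex <-; elim: (findex p b y) => [|n [rn En]] //=.
by have [? ->] := rung_phi rn.
Qed.

(* Rungs spread along large faces ([rung_face]) and across themselves
   ([Q_opposite]), so by connectedness [covered] reaches every vertex. *)
Variable Q : {set D} -> Prop.
Hypothesis Q_opposite : forall b, rung k b -> Q (face_of a s b) -> Q (face_of a s (opposite b)).

Definition covered x := exists b, [/\ fconnect s x b, rung k b & Q (face_of a s b)].

Lemma covered_sigma x : covered x -> covered (s x).
Proof.
by case=> b [xb rb Qb]; exists b; split => //; apply: connect_trans (fconnect1r sI x) xb.
Qed.

Lemma covered_face x b y : rung k b -> Q (face_of a s b) -> fconnect p b y ->
  fconnect s x y -> covered x.
Proof.
move=> rb Qb by_ xy; exists y; split => //; first by case: (rung_face rb by_).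
by rewrite -(face_of_fconnect by_).
Qed.

Lemma covered_alpha x : covered x -> covered (a x).
Proof.
case=> b [xb rb Qb]; have [rb' Eb'] := rung_opposite rb.
have [lb deg _] := rb; rewrite fconnect_sym // in xb.
have cov_b : covered (a b) by apply: covered_face rb Qb (fconnect1 p b) (fconnect1 s _).
have cov_sb : covered (a (s b)).
  by exists (opposite b); rewrite Eb' fconnect1r //; split => //; apply: Q_opposite.
have cov_pred z : s z = b -> covered (a z).
  move=> sz; apply: covered_face rb Qb _ (connect0 _ _).
  by rewrite fconnect_sym // -sz -phi_alpha fconnect1.
have [lb' deg' _] := rb'.
case: k34 deg deg' => -> deg deg'.
  by case/(vertex_deg3P deg): xb => -> //; apply: cov_pred; rewrite sigma3_id.
case/(vertex_deg4P deg): xb => -> //; last by apply: cov_pred; rewrite sigma4_id.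
have [tri _ _] := large_deg4_triangles lb' deg'.
have p3 : p (p (p (a (s b)))) = a (s b).
  by have := iter_order pI (a (s b)); rewrite Eb' tri -Eb'.
have E3 : s (a (s (s b))) = a (opposite b).
  by apply: pI; rewrite phi_alpha -Eb' -p3 phi_alpha.
have [rpb _] := rung_phi rb'.
exists (p (opposite b)); split => //.
- by apply: connect_trans (fconnect1 s _) _; rewrite E3 fconnect1.
- by rewrite -(face_of_fconnect (fconnect1 p _)); apply: Q_opposite.
Qed.

End Rungs.

Lemma bad_edge_rung d : bad_edge d -> exists k b, (k = 3 \/ k = 4) /\ rung k b.
Proof.
move=> bad; have [[b [db lb]] [b' [db' lb']] _ _] := bad.
rewrite fconnect_sym // in db; rewrite fconnect_sym // in db'.
case: (bad_edge_shape bad lb db lb' db') => [[deg3 _ E _]|[deg4 _ E _]|[deg4 deg4' E E']].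
- by exists 3, b; split; [left | split; rewrite -?E].
- by exists 4, b; split; [right | split; rewrite -?E].
exists 4, b; split; [by right | split => //].
have [_ tri _] := large_deg4_triangles lb deg4.
set w := a (s (s (s b'))).
have pw : p w = b' by rewrite /phi /w aK sigma4_id.
have lw : large w by rewrite -large_phi pw.
have p3 : p (p (p d)) = d by have := iter_order pI d; rewrite E tri.
have ppd : p (p d) = s w by rewrite /phi E'.
have asw : a (s w) = s b by apply: sI; rewrite -[s (a _)]/(p _) -ppd p3 E.
have asb : a (s b) = s w by rewrite -asw aK.
by apply: bad_edge_between lb lw (fconnect1 s b) _ _ _ _ _;
  rewrite ?asb ?fconnect1 ?sigma_neq ?sigma2_neq.
Qed.

Section RungEverywhere.
Hypothesis conn : connected_map a s.
Variable k : nat.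
Hypothesis k34 : k = 3 \/ k = 4.
Variable b0 : D.
Hypothesis rb0 : rung k b0.

Lemma rung_at_vertex x : exists b, fconnect s x b /\ rung k b.
Proof.
have [] := @connected_map_ind _ a s (covered k (fun _ => True)) b0 conn
  (covered_alpha k34 (fun _ _ _ => I)) (covered_sigma (Q := fun _ => True))
  (ex_intro _ b0 (And3 (connect0 _ _) rb0 I)) x.
by move=> b [xb rb _]; exists b.
Qed.

Lemma order_sigma_rung x : order s x = k.
Proof. by have [b [xb [_ <- _]]] := rung_at_vertex x; apply: fconnect_order. Qed.

Lemma large_rung x : large x -> rung k x.
Proof.
move=> lx; have [b [xb rb]] := rung_at_vertex x.
by have [lb _ _] := rb; rewrite (large_unique lx lb xb).
Qed.

Lemma small_face_order y : ~~ large y -> order p y = 7 - k.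
Proof.
move=> nly; have [b [yb rb]] := rung_at_vertex y.
have [[lb' deg' _] Eb'] := rung_opposite rb; have [lb deg _] := rb.
rewrite fconnect_sym // in yb.
case: k34 deg deg' => -> deg deg' /=.
  have [quad quad'] := bad_edge_quadrangles lb deg lb' deg' Eb'.
  move: nly; case/(vertex_deg3P deg): yb => ->; first by rewrite lb.
    by [].
  by rewrite -order_phi_alpha.
have [tri tri' tri''] := large_deg4_triangles lb deg.
by move: nly; case/(vertex_deg4P deg): yb => -> //; rewrite lb.
Qed.

Lemma card_vertices_rung : (#|vertices s|%:R : rat) = (#|D|%:R / k%:R)%R.
Proof.
have := card_orbit_sets sI predT.
have -> : [set O in [set [set y | fconnect s x y] | x : D] | predT O] = vertices s.
  by apply/setP => O; rewrite !inE andbT.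
move=> ->; rewrite (eq_bigr (fun _ => k%:R^-1)%R); last by move=> x _; rewrite order_sigma_rung.
by rewrite sumr_const mulr_natl; congr (_ *+ _)%R; apply: eq_card.
Qed.

Lemma card_vertices_large : #|vertices s| = #|large_darts|.
Proof.
have -> : vertices s = [set vertex_of s x | x in large_darts].
  apply/setP => O; apply/imsetP/imsetP => [[y _ ->]|[y _ ->]]; last by exists y.
  have [b [yb [lb _ _]]] := rung_at_vertex y.
  by exists b; rewrite ?inE // /vertex_of (fconnect_setE sI yb).
rewrite card_in_imset // => x y; rewrite !inE => lx ly Exy.
apply: large_unique lx ly _.
have : y \in vertex_of s y by rewrite inE connect0.
by rewrite -Exy inE.
Qed.

Lemma card_faces_rung : (#|faces a s|%:R : rat) =
  (#|large_faces|%:R + (#|D| - #|large_darts|)%:R / (7 - k)%:R)%R.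
Proof.
have := card_orbit_sets pI predT.
have -> : [set O in [set [set y | fconnect p x y] | x : D] | predT O] = faces a s.
  by apply/setP => O; rewrite !inE andbT.
move=> ->; rewrite (bigID large) /=.
have card_large := card_orbit_sets pI (fun O => 20 <= #|O|).
rewrite (eq_bigl large) in card_large => [|x]; last by rewrite /= cardsE.
rewrite -card_large; congr (_ + _)%R.
rewrite (eq_bigr (fun _ => (7 - k)%:R^-1)%R) => [|x]; last by move/small_face_order->.
rewrite sumr_const mulr_natl; congr (_ *+ _)%R.
by rewrite -(cardsC large_darts) addKn; apply: eq_card => x; rewrite !inE.
Qed.

Hypothesis euler : (#|vertices s| + #|faces a s|).*2 = #|D| + 4.

Lemma card_large_faces : #|large_faces| = 2.
Proof.
have eV := card_vertices_rung; have eF := card_faces_rung.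
have eE : ((#|vertices s|%:R + #|faces a s|%:R) * 2%:R = #|D|%:R + 4%:R :> rat)%R.
  by rewrite -natrD -natrM muln2 euler natrD.
rewrite natrB ?max_card // in eF.
rewrite card_vertices_large in eV eE.
apply/eqP; rewrite -(eqr_nat rat); apply/eqP.
move: eV eF eE.
move: (#|large_darts|%:R)%R (#|faces a s|%:R)%R (#|D|%:R)%R (#|large_faces|%:R)%R => V F N B.
by case: k34 => ->; [change (7 - 3)%N with 4%N | change (7 - 4)%N with 3%N]; lra.
Qed.

(* If the two sides of a rung shared a face, every rung would have its large
   corner on that face, leaving no room for the second large face. *)
Lemma opposite_face_neq x : large x -> face_of a s (opposite x) != face_of a s x.
Proof.
move=> lx; apply/negP => /eqP opp_x; set f0 := face_of a s x in opp_x.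
have Q_opp b : rung k b -> face_of a s b = f0 -> face_of a s (opposite b) = f0.
  move=> _ fb; have xb : fconnect p x b by have := mem_face_of b; rewrite fb inE.
  by have [_ ->] := rung_face k34 (large_rung lx) xb.
have cov := @connected_map_ind _ a s (covered k (fun O => O = f0)) x conn
  (covered_alpha k34 Q_opp) (covered_sigma (Q := fun O => O = f0))
  (ex_intro _ x (And3 (connect0 _ _) (large_rung lx) erefl)).
have [O [Olarge Of0]] : exists O, O \in large_faces /\ O != f0.
  have /cards2P [O1 [O2 [O12 EB]]] : #|large_faces| == 2 by rewrite card_large_faces.
  case: (eqVneq O1 f0) => [<-|]; last by exists O1; rewrite EB !inE eqxx.
  by exists O2; rewrite EB !inE eqxx orbT eq_sym.
have [z [lz Oz]] := large_facesP Olarge.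
have [b [zb [lb _ _] fb]] := cov z.
by move: Of0; rewrite Oz (large_unique lz lb zb) fb eqxx.
Qed.

Lemma opposite_inj : injective opposite.
Proof. by move=> x y /(finv_inj sI) /(inv_inj aK) /sI. Qed.

Section TwoLargeFaces.
Variables O O' : {set D}.
Hypotheses (large_facesE : large_faces = [set O; O']) (neq_OO' : O != O').

Lemma opposite_other_face x : x \in O -> opposite x \in O'.
Proof.
move=> xO; have OL : O \in large_faces by rewrite large_facesE !inE eqxx.
have lx := large_face_size OL xO.
have OF : is_face a s O by move: OL; rewrite inE => /andP[].
have [[lox _ _] _] := rung_opposite (large_rung lx).
have := large_face_of lox; rewrite large_facesE !inE => /orP[]/eqP E.
  have := opposite_face_neq lx.
  by rewrite E (face_of_mem OF xO) eqxx.
by rewrite -E mem_face_of.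
Qed.

Lemma card_large_face_le : #|O| <= #|O'|.
Proof.
rewrite -(card_imset O opposite_inj); apply: subset_leq_card.
by apply/subsetP => _ /imsetP[x xO ->]; apply: opposite_other_face.
Qed.

Lemma large_dartsE : large_darts = O :|: O'.
Proof.
have OL : O \in large_faces by rewrite large_facesE !inE eqxx.
have O'L : O' \in large_faces by rewrite large_facesE !inE eqxx orbT.
apply/setP => x; rewrite !inE; apply/idP/orP => [lx|[] xO].
- by have := large_face_of lx; rewrite large_facesE !inE => /orP[]/eqP<-; rewrite mem_face_of; auto.
- exact: large_face_size OL x xO.
- exact: large_face_size O'L x xO.
Qed.

Lemma card_vertices_large_faces : #|O'| = #|O| -> #|vertices s| = 2 * #|O|.
Proof.
move=> eqOO'.
have /andP[OF _] : is_face a s O && (20 <= #|O|).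
  by rewrite -in_large_faces large_facesE !inE eqxx.
have /andP[O'F _] : is_face a s O' && (20 <= #|O'|).
  by rewrite -in_large_faces large_facesE !inE eqxx orbT.
have disj : O :&: O' = set0.
  apply/setP => x; rewrite !inE; apply/andP => [[xO xO']].
  by move: neq_OO'; rewrite -(face_of_mem OF xO) -(face_of_mem O'F xO') eqxx.
by rewrite card_vertices_large large_dartsE cardsU disj cards0 subn0 eqOO' addnn mul2n.
Qed.

End TwoLargeFaces.

Lemma vertex_large_card v : is_vertex s v -> #|v| = k /\ #|v :&: large_darts| = 1.
Proof.
case/imsetP=> z _ ->; split; first by rewrite /vertex_of cardsE; apply: order_sigma_rung.
have [b [zb [lb _ _]]] := rung_at_vertex z.
suff -> : vertex_of s z :&: large_darts = [set b] by rewrite cards1.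
apply/setP => y; rewrite !inE; apply/andP/eqP => [[zy ly]|->]; last by split.
by apply: large_unique ly lb (connect_trans _ zb); rewrite fconnect_sym.
Qed.

Lemma small_face_card f : is_face a s f -> f \notin large_faces -> #|f| = 7 - k.
Proof.
case/imsetP=> z _ -> nL; rewrite /face_of cardsE; apply: small_face_order.
by apply: contra nL; apply: large_face_of.
Qed.

Lemma rung_prism_or_antiprism : is_prism a s \/ is_antiprism a s.
Proof.
have /cards2P [O1 [O2 [O12 EB]]] : #|large_faces| == 2 by rewrite card_large_faces.
have /andP[F1 c1] : is_face a s O1 && (20 <= #|O1|).
  by rewrite -in_large_faces EB !inE eqxx.
have /andP[F2 _] : is_face a s O2 && (20 <= #|O2|).
  by rewrite -in_large_faces EB !inE eqxx orbT.
have eN : #|O2| = #|O1|.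
  apply/eqP; rewrite eqn_leq !(card_large_face_le EB) //.
  by rewrite (card_large_face_le (O := O2) (O' := O1)) ?eq_sym // EB setUC.
have cV := card_vertices_large_faces EB O12 eN.
have vP v : is_vertex s v -> #|v| = k /\ #|v :&: (O1 :|: O2)| = 1.
  by rewrite -(large_dartsE EB); apply: vertex_large_card.
have fP f : is_face a s f -> f != O1 -> f != O2 -> #|f| = 7 - k.
  by move=> Ff n1 n2; apply: small_face_card; rewrite // EB !inE negb_or n1.
have eV := card_vertices_rung; have eF := card_faces_rung.
rewrite natrB ?max_card // card_large_faces -card_vertices_large cV in eF.
rewrite cV in eV.
have cF : #|faces a s| = (if k == 3 then #|O1| + 2 else 2 * #|O1| + 2).
  apply/eqP; rewrite -(eqr_nat rat); apply/eqP; move: eF eV.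
  move: (#|faces a s|%:R)%R (#|D|%:R)%R => F N.
  by case: k34 => ->; [change (7 - 3)%N with 4%N | change (7 - 4)%N with 3%N];
    rewrite /= ?natrD ?natrM; move: (#|O1|%:R)%R => n; lra.
case: k34 => ek; rewrite ek /= in vP fP cF; [left | right];
  exists #|O1|, O1, O2; split; rewrite ?(leq_trans _ c1) //.
Qed.

End RungEverywhere.

Lemma bad_edgeP d : sees_large d -> sees_large (a d) -> ~~ large d -> ~~ large (s d) ->
  bad_edge d.
Proof.
move=> sd sad nld nlsd; split; rewrite ?nld ?nlsd //.
by rewrite -[s (a d)]/(p d) large_phi nld andbT -large_phi phi_alpha.
Qed.

Lemma bad_edge_prism_or_antiprism d : connected_map a s ->
  (#|vertices s| + #|faces a s|).*2 = #|D| + 4 ->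
  bad_edge d -> is_prism a s \/ is_antiprism a s.
Proof.
move=> conn euler /bad_edge_rung[k [b [k34 rb]]].
exact: (rung_prism_or_antiprism conn k34 rb euler).
Qed.

Lemma edge_large_face d b b' : large b -> fconnect s b d ->
    large b' -> fconnect s b' (a d) -> large d || large (s d) ->
  face_of a s b = face_of a s b' /\ (d \in face_of a s b) || (a d \in face_of a s b).
Proof.
move=> lb bd lb' bd' /orP[ld | lsd].
- have Ebd := large_unique lb ld bd; subst d.
  have bpb : fconnect s b' (p b) by apply: connect_trans bd' (fconnect1 s _).
  have -> : b' = p b by apply: large_unique lb' _ bpb; rewrite large_phi.
  by rewrite mem_face_of; split=> //; apply/face_of_fconnect/fconnect1.
- have Ebsd := large_unique lb lsd (connect_trans bd (fconnect1 s d)); subst b.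
  have adsd : fconnect p (a d) (s d) by rewrite -phi_alpha fconnect1.
  have lad : large (a d) by rewrite -phi_alpha large_phi in lsd.
  by rewrite (large_unique lb' lad bd') -(face_of_fconnect adsd) mem_face_of orbT.
Qed.

End PositivelyCurved.

Lemma planar_pcc_positively_curved (D : finType) (alpha sigma : D -> D) :
  planar_pcc alpha sigma -> positively_curved alpha sigma.
Proof.
case=> [[sI [aK [_ [_ [no_loop [simple _]]]]]] vertex_pcc _ _].
split=> // x; have /vertex_pcc[curv deg] : is_vertex sigma (vertex_of sigma x) by apply: imset_f.
- by rewrite /vertex_of cardsE in deg.
- exact: curv.
Qed.

Theorem lemma2p4 (D : finType) (alpha sigma : D -> D) :
  planar_pcc alpha sigma ->
  forall v v' f f' : {set D},
    is_vertex sigma v -> is_vertex sigma v' ->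
    is_face alpha sigma f -> is_face alpha sigma f' ->
    incident_face v f -> incident_face v' f' ->
    20 <= #|f| -> 20 <= #|f'| ->
    adjacent alpha v v' ->
    f = f' /\ edge_on_face alpha v v' f.
Proof.
move=> pcc; have pc := planar_pcc_positively_curved pcc.
case: pcc => [[sI [_ [_ [conn [_ [_ euler]]]]]] _ not_prism not_antiprism].
move=> v v' f f' Vv Vv' Ff Ff' /existsP[b /andP[bv bf]] /existsP[b' /andP[bv' bf']] f20 f'20.
case/existsP=> d /andP[dv adv'].
have lb : large alpha sigma b by apply: (large_face_size pc _ bf); apply/setIdP.
have lb' : large alpha sigma b' by apply: (large_face_size pc _ bf'); apply/setIdP.
have bd : fconnect sigma b d by rewrite -(vertex_of_mem pc Vv bv) inE in dv.
have bd' : fconnect sigma b' (alpha d) by rewrite -(vertex_of_mem pc Vv' bv') inE in adv'.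
rewrite -(face_of_mem pc Ff bf) -(face_of_mem pc Ff' bf').
case: (boolP (large alpha sigma d || large alpha sigma (sigma d))) => [ld | /norP[nld nlsd]].
  have [-> on_f] := edge_large_face pc lb bd lb' bd' ld.
  by split=> //; apply/existsP; exists d; rewrite dv adv' on_f.
have sees_d : sees_large alpha sigma d by exists b; rewrite fconnect_sym.
have sees_ad : sees_large alpha sigma (alpha d) by exists b'; rewrite fconnect_sym.
by case: (bad_edge_prism_or_antiprism pc conn euler (bad_edgeP pc sees_d sees_ad nld nlsd)).
Qed.
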